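(* Let $R$ be a ring. The following conditions are equivalent. (1) For every exact complex $M$ and every bounded above complex $N$, if $N_n\in\underline{\mathfrak{Pr}}^{-1}_{R\text{-Mod}}(Z_{n-1}(M))$ for every $n\in\mathbb{Z}$, then $N\in\underline{\mathfrak{Pr}}^{-1}_{\mathscr{C}(R)}(M)$. (2) For every exact complex $M$ and every module $N$, if there exists $n\in\mathbb{Z}$ such that $N\in\underline{\mathfrak{Pr}}^{-1}_{R\text{-Mod}}(Z_{n-1}(M))$, then $\underline{N}[n]\in\underline{\mathfrak{Pr}}^{-1}_{\mathscr{C}(R)}(M)$. (3) $R$ is quasi-Frobenius.
   Context: $R$ is an associative ring with unit; modules are left $R$-modules; $\mathscr{C}(R)$ is the category of homologically indexed complexes, with $Z_n(X)=\mathrm{Ker}\,d_n^X$. A complex $X$ is bounded above if there is $b$ with $X_n=0$ for all $n\ge b$. For objects $M,N$ of an abelian category $\mathscr{A}$ with enough projectives ($R\text{-Mod}$ or $\mathscr{C}(R)$), $M$ is $N$-subprojective if every morphism $M\to N$ factors through a projective object; $\underline{\mathfrak{Pr}}^{-1}_{\mathscr{A}}(M)$ is the class of all $N$ such that $M$ is $N$-subprojective. For a module $N$, $\underline{N}$ is the complex with $N$ in degree $0$ and $0$ elsewhere; for a complex $X$, $X[n]$ is the complex with $X[n]_i=X_{i-n}$ and differential $(-1)^nd^X_{i-n}$. A ring is quasi-Frobenius if every projective module is injective (equivalently every injective module is projective). *)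

(* Modules over a ring R : pzRingType are lmodType R;
   complexes are Z-indexed families of such modules (homological indexing). *)
From HB Require Import structures.
From mathcomp Require Import all_boot all_order all_algebra.
From mathcomp Require Import zify.
Set Implicit Arguments. Unset Strict Implicit. Unset Printing Implicit Defensive.
Import Order.TTheory GRing.Theory Num.Theory.
Local Open Scope ring_scope.

Definition lin (R : pzRingType) (M N : lmodType R) (f : M -> N) :=
  forall (a : R) (x y : M), f (a *: x + y) = a *: f x + f y.

Lemma lin_0 (R : pzRingType) (M N : lmodType R) (f : M -> N) :
  lin f -> f 0 = 0.
Proof.
move=> H; have := H 1 0 0; rewrite !scale1r addr0.
by move/(congr1 (fun z => z - f 0)); rewrite addrK subrr => <-.
Qed.

Lemma lin_opp (R : pzRingType) (M N : lmodType R) (f : M -> N) x :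
  lin f -> f (- x) = - f x.
Proof.
move=> H; have := H (-1) x 0; rewrite addr0 (lin_0 H) addr0 !scaleN1r //.
Qed.

Definition projective_mod (R : pzRingType) (P : lmodType R) :=
  forall (M N : lmodType R) (p : M -> N), lin p -> (forall y, exists x, p x = y) ->
  forall h : P -> N, lin h -> exists k : P -> M, lin k /\ forall x, p (k x) = h x.

Definition injective_mod (R : pzRingType) (E : lmodType R) :=
  forall (M N : lmodType R) (i : M -> N), lin i -> injective i ->
  forall h : M -> E, lin h -> exists k : N -> E, lin k /\ forall x, k (i x) = h x.

Definition quasi_frobenius (R : pzRingType) :=
  forall P : lmodType R, projective_mod P -> injective_mod P.

Definition subproj_mod (R : pzRingType) (M N : lmodType R) :=
  forall h : M -> N, lin h -> exists P : lmodType R, projective_mod P /\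
    exists (f : M -> P) (g : P -> N), [/\ lin f, lin g & forall x, g (f x) = h x].

(* Complexes: d i j : X_i -> X_j, which is zero unless j = i - 1;
   so d i (i-1) is the differential d_i^X. *)
Unset Implicit Arguments.
Record complex (R : pzRingType) := Complex {
  cobj :> int -> lmodType R;
  cd : forall i j : int, cobj i -> cobj j;
  cd_lin : forall i j, lin (cd i j);
  cd_zero : forall i j : int, j != i - 1 -> forall x, cd i j x = 0;
  cd_dd : forall i j k x, cd j k (cd i j x) = 0 }.
Set Implicit Arguments.
Arguments cd {R} c i j _ : rename.
Arguments cd_lin {R} c i j _ _ _ : rename.

Definition cx_hom (R : pzRingType) (X Y : complex R) (f : forall i, X i -> Y i) :=
  (forall i, lin (f i)) /\ forall i j x, f j (cd X i j x) = cd Y i j (f i x).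

(* projective objects of C(R) (lifting against epimorphisms = degreewise surjections) *)
Definition projective_cx (R : pzRingType) (P : complex R) :=
  forall (X Y : complex R) (p : forall i, X i -> Y i), cx_hom p ->
  (forall i y, exists x, p i x = y) ->
  forall h : forall i, P i -> Y i, cx_hom h ->
  exists k : forall i, P i -> X i, cx_hom k /\ forall i x, p i (k i x) = h i x.

Definition subproj_cx (R : pzRingType) (M N : complex R) :=
  forall h : forall i, M i -> N i, cx_hom h ->
  exists P : complex R, projective_cx P /\
    exists (f : forall i, M i -> P i) (g : forall i, P i -> N i),
      [/\ cx_hom f, cx_hom g & forall i x, g i (f i x) = h i x].

Definition in_Z (R : pzRingType) (X : complex R) (k : int) (x : X k) :=
  cd X k (k - 1) x = 0.

(* R-linear maps Z_k(X) -> N, represented by functions on X_k whose values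
   only matter on Z_k(X) *)
Definition lin_on_Z (R : pzRingType) (X : complex R) (k : int) (N : lmodType R)
  (h : X k -> N) :=
  forall (a : R) (x y : X k), in_Z x -> in_Z y -> h (a *: x + y) = a *: h x + h y.

Definition subproj_Z (R : pzRingType) (X : complex R) (k : int) (N : lmodType R) :=
  forall h : X k -> N, lin_on_Z h ->
  exists P : lmodType R, projective_mod P /\
    exists (f : X k -> P) (g : P -> N),
      [/\ lin_on_Z f, lin g & forall x, in_Z x -> g (f x) = h x].

Definition exact_cx (R : pzRingType) (X : complex R) :=
  forall (n : int) (x : X n), cd X n (n - 1) x = 0 ->
  exists y : X (n + 1), cd X (n + 1) n y = x.

Definition bounded_above (R : pzRingType) (X : complex R) :=
  exists b : int, forall n : int, b <= n -> forall x : X n, x = 0.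

Definition zero_mod (R : pzRingType) : lmodType R := 'rV[R]_0.

Definition stalk_obj (R : pzRingType) (N : lmodType R) (i : int) : lmodType R :=
  if i == 0 then N else zero_mod R.

Definition stalk (R : pzRingType) (N : lmodType R) : complex R.
Proof.
refine (@Complex R (stalk_obj N) (fun i j _ => 0) _ _ _) => //.
by move=> i j a x y; rewrite scaler0 addr0.
Defined.

Definition shift_d (R : pzRingType) (X : complex R) (n : int) (i j : int)
  (x : X (i - n)) : X (j - n) :=
  if odd (absz n) then - cd X (i - n) (j - n) x else cd X (i - n) (j - n) x.

Definition shift (R : pzRingType) (X : complex R) (n : int) : complex R.
Proof.
refine (@Complex R (fun i => X (i - n)) (@shift_d R X n) _ _ _).
- move=> i j a x y; rewrite /shift_d (cd_lin X).
  by case: (odd _) => //; rewrite opprD scalerN.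
- move=> i j Hij x; rewrite /shift_d cd_zero ?oppr0 ?if_same //.
  by apply: contra Hij => /eqP H; apply/eqP; lia.
- move=> i j k x; rewrite /shift_d.
  case: (odd _); rewrite ?(lin_opp _ (cd_lin X _ _)) cd_dd ?opprK ?oppr0 //.
Defined.

(* A chain map h : M -> N is null-homotopic through maps s_i : M_i -> N_(i+1)
   that factor through projective modules iff it factors through a projective
   complex: such an h factors through the sum of the disks on the projective
   modules, and conversely projective complexes are contractible.
   (1) => (2): a shifted stalk complex is bounded above.
   (3) => (1): the homotopy is built downwards from the bound of N.  Given s_n,
   the map h_n - d s_n vanishes on Z_n(M) = B_n(M), hence descends along d to
   Z_(n-1)(M); there it factors through a projective P by hypothesis, and P,
   being injective, extends this factorisation to M_(n-1), which gives s_(n-1).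
   (2) => (3): to extend f : A -> P along an injection A -> B, apply (2) to the
   exact complex 0 -> A -> B -> B/A -> 0 (A in degree 2) and to f viewed as a
   map into P[2]; the degree-1 component of a null-homotopy is the extension. *)

From HB Require Import structures.
From mathcomp Require Import all_boot all_order all_algebra.
From mathcomp Require Import zify boolp.
Import GRing.Theory.
Local Open Scope ring_scope.
Local Open Scope quotient_scope.

Section LinearMaps.
Context {R : pzRingType}.
Implicit Types M N P : lmodType R.

Lemma linD {M N} {f : M -> N} : lin f -> forall x y, f (x + y) = f x + f y.
Proof. by move=> f_lin x y; have := f_lin 1 x y; rewrite !scale1r. Qed.

Lemma linB {M N} {f : M -> N} : lin f -> forall x y, f (x - y) = f x - f y.
Proof. by move=> f_lin x y; rewrite (linD f_lin) (lin_opp _ f_lin). Qed.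

Lemma lin_comp {M N P} {f : M -> N} {g : N -> P} :
  lin f -> lin g -> lin (fun x => g (f x)).
Proof. by move=> f_lin g_lin a x y; rewrite f_lin g_lin. Qed.

Lemma lin_id {M} : lin (fun x : M => x).
Proof. by []. Qed.

Lemma lin_cst0 {M N} : lin (fun _ : M => 0 : N).
Proof. by move=> a x y; rewrite scaler0 addr0. Qed.

Lemma lin_sub {M N} {f g : M -> N} : lin f -> lin g -> lin (fun x => f x - g x).
Proof.
by move=> f_lin g_lin a x y; rewrite f_lin g_lin scalerDr scalerN opprD addrACA.
Qed.

Lemma lin_pair {M N P} {f : M -> N} {g : M -> P} :
  lin f -> lin g -> lin (fun x => (f x, g x) : (N * P)%type).
Proof. by move=> f_lin g_lin a x y; rewrite f_lin g_lin. Qed.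

End LinearMaps.

Lemma zero_mod_eq0 {R : pzRingType} (x : zero_mod R) : x = 0.
Proof. by apply/rowP => -[]. Qed.

Lemma projective_zero_mod (R : pzRingType) : projective_mod (zero_mod R).
Proof.
move=> M N p p_lin _ h h_lin; exists (fun _ => 0); split; first exact: lin_cst0.
by move=> x; rewrite (lin_0 p_lin) (zero_mod_eq0 x) (lin_0 h_lin).
Qed.

Lemma subproj_Z_projective {R : pzRingType} (X : complex R) k (P : lmodType R) :
  projective_mod P -> subproj_Z X k P.
Proof. by move=> P_proj h h_lin; exists P; split => //; exists h, id. Qed.

Definition proj_factor {R : pzRingType} {M N : lmodType R} (h : M -> N) :=
  exists P : lmodType R, projective_mod P /\
    exists (f : M -> P) (g : P -> N), [/\ lin f, lin g & forall x, g (f x) = h x].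

Definition proj_factor_cx {R : pzRingType} {M N : complex R}
    (h : forall i, M i -> N i) :=
  exists P : complex R, projective_cx P /\
    exists (f : forall i, M i -> P i) (g : forall i, P i -> N i),
      [/\ cx_hom f, cx_hom g & forall i x, g i (f i x) = h i x].

Lemma proj_factor_lin {R : pzRingType} {M N : lmodType R} {h : M -> N} :
  proj_factor h -> lin h.
Proof. by case=> P [_ [f [g [f_lin g_lin gf]]]] a x y; rewrite -!gf f_lin g_lin. Qed.

Lemma proj_factor0 {R : pzRingType} {M N : lmodType R} :
  proj_factor (fun _ : M => 0 : N).
Proof.
exists (zero_mod R); split; first exact: projective_zero_mod.
by exists (fun _ => 0), (fun _ => 0); split => //; exact: lin_cst0.
Qed.

(* The indices [i - 1 + 1] and [i] are equal but not convertible; [transport]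
   moves an element between two such fibres, and returns [dflt j] when the
   indices differ. *)
Definition transport {T : int -> Type} (dflt : forall i, T i) i j (x : T i) : T j :=
  if @eqP _ i j is ReflectT e then ecast k (T k) e x else dflt j.

Section Transport.
Context {T : int -> Type} {dflt : forall i, T i}.

Lemma transport_id i x : transport dflt i i x = x.
Proof. by rewrite /transport; case: eqP => // e; rewrite eq_axiomK. Qed.

Lemma transport_ne i j x : i != j -> transport dflt i j x = dflt j.
Proof. by rewrite /transport; case: eqP. Qed.

Lemma transport_pred (P : forall i, T i -> Prop) {i j} {x : T i} :
  i = j -> P i x -> P j (transport dflt i j x).
Proof. by move=> <-; rewrite transport_id. Qed.

Lemma transport_rel (Rel : forall i j, T i -> T j -> Prop)
    {i i' j j'} {x : T i} {y : T j} :
  i = i' -> j = j' -> Rel i j x y ->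
  Rel i' j' (transport dflt i i' x) (transport dflt j j' y).
Proof. by move=> <- <-; rewrite !transport_id. Qed.

End Transport.

Definition tr {R : pzRingType} (F : int -> lmodType R) : forall i j, F i -> F j :=
  @transport (fun i => F i) (fun i => 0).

Section ModuleTransport.
Context {R : pzRingType} {F : int -> lmodType R}.

Lemma tr_id i x : tr F i i x = x.
Proof. exact: transport_id. Qed.

Lemma tr_ne i j x : i != j -> tr F i j x = 0.
Proof. exact: transport_ne. Qed.

Lemma tr_lin {i j} : lin (tr F i j).
Proof.
by case: (eqVneq i j) => [<-|ne] a x y; rewrite ?tr_id ?tr_ne // scaler0 addr0.
Qed.

Lemma tr_tr i j x : i = j -> tr F j i (tr F i j x) = x.
Proof. by move=> <-; rewrite !tr_id. Qed.

End ModuleTransport.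

Lemma tr_natural {R : pzRingType} {F G : int -> lmodType R} {g : forall i, F i -> G i} :
  (forall i, lin (g i)) -> forall i j x, g j (tr F i j x) = tr G i j (g i x).
Proof.
move=> g_lin i j x; case: (eqVneq i j) => [<-|ne]; first by rewrite !tr_id.
by rewrite !tr_ne // lin_0.
Qed.

Section ComplexBasics.
Context {R : pzRingType} (X : complex R).

Lemma cd0 i j : cd X i j 0 = 0.
Proof. exact: lin_0 (cd_lin X i j). Qed.

Lemma cdD i j x y : cd X i j (x + y) = cd X i j x + cd X i j y.
Proof. exact: linD (cd_lin X i j) x y. Qed.

Lemma cdB i j x y : cd X i j (x - y) = cd X i j x - cd X i j y.
Proof. exact: linB (cd_lin X i j) x y. Qed.

Lemma cd_tr i i' j x : i = i' -> cd X i j x = cd X i' j (tr X i i' x).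
Proof. by move=> <-; rewrite tr_id. Qed.

End ComplexBasics.

Definition null_homotopy {R : pzRingType} {M N : complex R}
    (h : forall i, M i -> N i) (s : forall i, M i -> N (i + 1)) :=
  forall i x, h i x =
    tr N (i - 1 + 1) i (s (i - 1) (cd M i (i - 1) x)) + cd N (i + 1) i (s i x).

Section Submodule.
Context {R : pzRingType} {V : lmodType R} {S : {pred V}}.
Hypothesis S_closed : GRing.submod_closed S.
HB.instance Definition _ := GRing.isSubmodClosed.Build R V S S_closed.

Record submod := Submod { submod_val : V; _ : submod_val \in S }.
HB.instance Definition _ := [isSub for submod_val].
HB.instance Definition _ := [Choice of submod by <:].
HB.instance Definition _ := [SubChoice_isSubLmodule of submod by <:].

Lemma injective_extend {E : lmodType R} {f : V -> E} : injective_mod E ->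
  (forall a x y, x \in S -> y \in S -> f (a *: x + y) = a *: f x + f y) ->
  exists F : V -> E, lin F /\ {in S, F =1 f}.
Proof.
move=> E_inj f_lin.
have [|F [F_lin Ff]] := E_inj submod V submod_val (fun _ _ _ => erefl) val_inj
  (fun u => f (submod_val u)).
  by move=> a [x Sx] [y Sy]; exact: f_lin.
by exists F; split=> // x Sx; exact: (Ff (Submod x Sx)).
Qed.

End Submodule.

Section ModuleQuotient.
Context {R : pzRingType} {V : lmodType R} {S : {pred V}}.
Hypothesis S_closed : GRing.submod_closed S.
HB.instance Definition _ := GRing.isSubmodClosed.Build R V S S_closed.

Definition modquot := Quotient.quot S.
HB.instance Definition _ := GRing.Zmodule.on modquot.
HB.instance Definition _ := EqQuotient.on modquot.

Definition quot_scale (a : R) := lift_op1 modquot ( *:%R a).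

Lemma pi_scale a : {morph \pi : x / a *: x >-> quot_scale a x}.
Proof.
move=> x; unlock quot_scale; apply/eqP; rewrite piE Quotient.equivE.
by rewrite -scalerBr rpredZ // Quotient.idealrBE reprK.
Qed.
Canonical pi_scale_morph a := PiMorph1 (pi_scale a).

Lemma quot_scaleA a b v : quot_scale a (quot_scale b v) = quot_scale (a * b) v.
Proof. by rewrite -[v]reprK !piE scalerA. Qed.

Lemma quot_scale1 : left_id 1 quot_scale.
Proof. by move=> v; rewrite -[v]reprK !piE scale1r. Qed.

Lemma quot_scaleDr : right_distributive quot_scale +%R.
Proof. by move=> a u v; rewrite -[u]reprK -[v]reprK !piE scalerDr. Qed.

Lemma quot_scaleDl v : {morph quot_scale^~ v : a b / a + b}.
Proof. by move=> a b; rewrite -[v]reprK !piE scalerDl. Qed.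

HB.instance Definition _ := GRing.Zmodule_isLmodule.Build R modquot
  quot_scaleA quot_scale1 quot_scaleDr quot_scaleDl.

Lemma lin_pi : lin (\pi : V -> modquot).
Proof. by move=> a x y; rewrite !piE. Qed.

Lemma pi_eq0 x : (\pi x == 0 :> modquot) = (x \in S).
Proof. by rewrite -[in RHS](subr0 x) Quotient.idealrBE !piE. Qed.

End ModuleQuotient.

Section DiskSum.
Context {R : pzRingType} (Q : int -> lmodType R).

Definition disk_obj i : lmodType R := (Q (i - 1) * Q i)%type.

Definition disk_d i j (p : disk_obj i) : disk_obj j := (0, tr Q (i - 1) j p.1).

Lemma disk_d_lin i j : lin (disk_d i j).
Proof.
by move=> a x y; rewrite /disk_d tr_lin; apply/pair_eqP; rewrite /= scaler0 addr0 !eqxx.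
Qed.

Lemma disk_d_zero i j : j != i - 1 -> forall p, disk_d i j p = 0.
Proof. by move=> ji p; rewrite /disk_d tr_ne // eq_sym. Qed.

Lemma disk_dd i j k p : disk_d j k (disk_d i j p) = 0.
Proof. by rewrite /disk_d lin_0 //; exact: tr_lin. Qed.

Definition disk_sum : complex R :=
  @Complex R disk_obj disk_d disk_d_lin disk_d_zero disk_dd.

Lemma disk_sum_projective :
  (forall i, projective_mod (Q i)) -> projective_cx disk_sum.
Proof.
move=> Q_proj X Y p [p_lin p_d] p_surj g [g_lin g_d].
have lift_gen i : exists u : Q (i - 1) -> X i,
    lin u /\ forall x, p i (u x) = g i (x, 0).
  have [u [u_lin u_p]] := Q_proj (i - 1) _ _ _ (p_lin i) (p_surj i) _
    (lin_comp (lin_pair lin_id lin_cst0) (g_lin i)).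
  by exists u.
pose u i := sval (cid (lift_gen i)).
have u_lin i : lin (u i) by rewrite /u; case: cid => ? [].
have u_p i x : p i (u i x) = g i (x, 0) by rewrite /u; case: cid => ? [].
(* (x, y) = (x, 0) + d (y, 0): lift the generators (x, 0) and extend along d. *)
exists (fun i q => u i q.1 + cd X (i + 1) i (u (i + 1) (tr Q i (i + 1 - 1) q.2))).
split; first split.
- move=> i a [x y] [x' y'] /=.
  by rewrite u_lin tr_lin u_lin (cd_lin X) scalerDr addrACA.
- move=> i j [x y] /=; rewrite /disk_d /=.
  have [->|ne] := eqVneq j (i - 1).
    rewrite tr_id lin_0 // add0r cdD cd_dd addr0.
    have shift_i i' (x' : Q (i - 1)) : i' = i ->
        cd X i' (i - 1) (u i' (tr Q (i - 1) (i' - 1) x')) = cd X i (i - 1) (u i x').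
      by move=> e; subst i'; rewrite tr_id.
    by apply: shift_i; lia.
  rewrite (@cd_zero _ X i j ne) [tr Q (i - 1) j x]tr_ne 1?eq_sym //= (lin_0 tr_lin).
  by rewrite !(lin_0 (u_lin _)) cd0 addr0.
- move=> i [x y] /=.
  rewrite (linD (p_lin i)) u_p p_d u_p -g_d /= /disk_d /= tr_tr; last by lia.
  rewrite -(linD (g_lin i)); congr (g i).
  by apply/pair_eqP; rewrite /= addr0 add0r !eqxx.
Qed.

Section DiskMaps.
Context {M N : complex R}.
Variables (beta : forall i, M i -> Q i) (gamma : forall i, Q i -> N (i + 1)).
Hypotheses (beta_lin : forall i, lin (beta i)) (gamma_lin : forall i, lin (gamma i)).

Definition disk_in i (m : M i) : disk_sum i :=
  (beta (i - 1) (cd M i (i - 1) m), beta i m).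

Definition disk_out i (q : disk_sum i) : N i :=
  tr N (i - 1 + 1) i (gamma (i - 1) q.1) + cd N (i + 1) i (gamma i q.2).

Lemma disk_in_hom : cx_hom disk_in.
Proof.
split=> [i|i j m].
  exact: lin_pair (lin_comp (cd_lin M _ _) (beta_lin _)) (beta_lin _).
rewrite /disk_in /= /disk_d /=; have [->|ne] := eqVneq j (i - 1).
  by rewrite cd_dd lin_0 // tr_id.
by rewrite (@cd_zero _ M i j ne) tr_ne 1?eq_sym // cd0 !(lin_0 (beta_lin _)).
Qed.

Lemma disk_out_hom : cx_hom disk_out.
Proof.
split=> [i a [x y] [x' y']|i j [x y]]; rewrite /disk_out /=.
  by rewrite gamma_lin tr_lin gamma_lin (cd_lin N) scalerDr addrACA.
rewrite /disk_d /=; have [->|ne] := eqVneq j (i - 1).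
  rewrite tr_id lin_0 // lin_0 ?add0r; last exact: tr_lin.
  by rewrite cdD cd_dd addr0; apply: cd_tr; lia.
rewrite (@cd_zero _ N i j ne) [tr Q (i - 1) j x]tr_ne 1?eq_sym //.
by rewrite !(lin_0 (gamma_lin _)) (lin_0 tr_lin) cd0 addr0.
Qed.

End DiskMaps.
End DiskSum.

Lemma proj_factor_choice {R : pzRingType} {I : Type} {M N : I -> lmodType R}
    {s : forall i, M i -> N i} :
  (forall i, proj_factor (s i)) ->
  exists (Q : I -> lmodType R) (beta : forall i, M i -> Q i)
    (gamma : forall i, Q i -> N i),
    [/\ forall i, projective_mod (Q i), forall i, lin (beta i),
        forall i, lin (gamma i) & forall i x, gamma i (beta i x) = s i x].
Proof.
move=> s_fact.
have pack i : exists q : {Q : lmodType R & ((M i -> Q) * (Q -> N i))%type},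
    [/\ projective_mod (projT1 q), lin (projT2 q).1, lin (projT2 q).2
      & forall x, (projT2 q).2 ((projT2 q).1 x) = s i x].
  case: (s_fact i) => Q [Q_proj [f [g [f_lin g_lin gf]]]].
  by exists (existT _ Q (f, g)).
pose q i := sval (cid (pack i)).
exists (fun i => projT1 (q i)), (fun i => (projT2 (q i)).1).
exists (fun i => (projT2 (q i)).2).
by split=> i; case: (svalP (cid (pack i))).
Qed.

Lemma null_homotopy_proj_factor_cx {R : pzRingType} {M N : complex R}
    {h : forall i, M i -> N i} {s : forall i, M i -> N (i + 1)} :
  (forall i, proj_factor (s i)) -> null_homotopy h s -> proj_factor_cx h.
Proof.
move=> s_fact hs.
have [Q [beta [gamma [Q_proj beta_lin gamma_lin gb]]]] := proj_factor_choice s_fact.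
exists (disk_sum Q); split; first exact: disk_sum_projective.
exists (disk_in Q beta), (disk_out Q gamma); split.
- exact: disk_in_hom.
- exact: disk_out_hom.
- by move=> i x; rewrite /disk_out /disk_in /= !gb -hs.
Qed.

Lemma projective_cx_contractible {R : pzRingType} {Q : complex R} :
  projective_cx Q -> exists s : forall i, Q i -> Q (i + 1),
    (forall i, lin (s i)) /\ null_homotopy (fun i q => q) s.
Proof.
move=> Q_proj; pose Q' i := Q (i + 1).
pose pi := disk_out Q' (fun i (q : Q' i) => q : Q (i + 1)).
have pi_hom : cx_hom pi by apply: disk_out_hom => i; exact: lin_id.
have pi_surj i (q : Q i) : exists p, pi i p = q.
  exists (tr Q i (i - 1 + 1) q, 0).
  by rewrite /pi /disk_out /= tr_tr ?cd0 ?addr0 //; lia.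
have [k [[k_lin k_d] pik]] := Q_proj _ _ pi pi_hom pi_surj (fun i q => q)
  (conj (fun i => lin_id) (fun i j x => erefl)).
exists (fun i q => (k i q).2); split=> [i a x y|i q]; first by rewrite k_lin.
have -> : (k (i - 1) (cd Q i (i - 1) q)).2 = (k i q).1.
  by rewrite k_d /= tr_id.
by rewrite -[in LHS](pik i q).
Qed.

Lemma proj_factor_cx_null_homotopy {R : pzRingType} {M N : complex R}
    {h : forall i, M i -> N i} :
  proj_factor_cx h -> exists s : forall i, M i -> N (i + 1),
    (forall i, lin (s i)) /\ null_homotopy h s.
Proof.
case=> P [P_proj [f [g [[f_lin f_d] [g_lin g_d] gf]]]].
have [s [s_lin s_id]] := projective_cx_contractible P_proj.
exists (fun i x => g (i + 1) (s i (f i x))); split=> [i|i x].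
  exact: lin_comp (lin_comp (f_lin i) (s_lin i)) (g_lin (i + 1)).
rewrite -gf {1}(s_id i (f i x)) (linD (g_lin i)) g_d -f_d.
by rewrite (tr_natural g_lin).
Qed.

Section DownwardRecursion.
Context {T : int -> Type} (dflt : forall i, T i).
Variables (P : forall i, T i -> Prop) (Rel : forall i j, T i -> T j -> Prop) (c : int).
Hypothesis P_dflt : forall i, c <= i -> P i (dflt i).
Hypothesis P_step : forall i (a : T i),
  P i a -> exists2 b : T (i - 1), P (i - 1) b & Rel i (i - 1) a b.

Local Notation cast := (transport dflt).
Local Notation stage k := {a : T (c - k%:Z) | P _ a}.

Lemma lez_sub0 : c <= c - 0%:Z.
Proof. by rewrite subr0. Qed.

Lemma subz_natS (k : nat) : c - k%:Z - 1 = c - k.+1%:Z.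
Proof. lia. Qed.

Definition next_stage {k} (a : stage k) : stage k.+1 :=
  let b := cid2 (P_step _ _ (svalP a)) in
  exist _ (cast _ _ (s2val b)) (transport_pred P (subz_natS k) (s2valP b)).

Lemma next_stage_rel k (a : stage k) : Rel _ _ (sval a) (sval (next_stage a)).
Proof.
rewrite /next_stage; case: cid2 => b _ Rab /=.
have := transport_rel (dflt := dflt) Rel erefl (subz_natS k) Rab.
by rewrite transport_id.
Qed.

Fixpoint stages k : stage k :=
  if k is k'.+1 then next_stage (stages k')
  else exist _ (dflt _) (P_dflt _ lez_sub0).

Definition descending_family i : T i :=
  if i <= c then cast _ i (sval (stages (absz (c - i)%R))) else dflt i.

Lemma downward_recursion : exists F : forall i, T i,
  (forall i, P i (F i)) /\ (forall i, i <= c -> Rel i (i - 1) (F i) (F (i - 1))).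
Proof.
exists descending_family; split=> [i|i le_ic]; rewrite /descending_family.
  case: ifP => [le_ic|/negbT gt_ic]; last by apply: P_dflt; lia.
  by apply: transport_pred (svalP _); lia.
have -> : (i - 1 <= c) = true by lia.
have -> : absz (c - (i - 1))%R = (absz (c - i)%R).+1 by lia.
by rewrite le_ic; apply: transport_rel (next_stage_rel _ (stages _)); lia.
Qed.

End DownwardRecursion.

Lemma exact_at {R : pzRingType} {M : complex R} : exact_cx M ->
  forall i (z : M (i - 1)), in_Z z -> exists y : M i, cd M i (i - 1) y = z.
Proof.
move=> M_exact i z z_Z; have := M_exact (i - 1) z z_Z.
by have -> : i - 1 + 1 = i by lia.
Qed.

Lemma exact_descend {R : pzRingType} {M : complex R} {V : lmodType R} {i}
    {t : M i -> V} :
  exact_cx M -> lin t -> (forall m, in_Z m -> t m = 0) ->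
  exists t' : M (i - 1) -> V, lin_on_Z t' /\ forall m, t' (cd M i (i - 1) m) = t m.
Proof.
move=> M_exact t_lin t_Z.
(* Stated for every [z], so that [cid] yields a total section of [d] on cycles. *)
have lift_ex z : exists y : M i, in_Z z -> cd M i (i - 1) y = z.
  have [/(exact_at M_exact) [y <-]|z_nZ] := eqVneq (cd M (i - 1) (i - 1 - 1) z) 0.
    by exists y.
  by exists 0 => z_Z; rewrite z_Z eqxx in z_nZ.
pose lift z := sval (cid (lift_ex z)).
have liftK z : in_Z z -> cd M i (i - 1) (lift z) = z := svalP (cid (lift_ex z)).
have t_d m m' : cd M i (i - 1) m = cd M i (i - 1) m' -> t m = t m'.
  by move=> e; apply/eqP; rewrite -subr_eq0 -(linB t_lin) t_Z // /in_Z cdB e subrr.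
exists (fun z => t (lift z)); split=> [a x y x_Z y_Z|m].
  rewrite -t_lin; apply: t_d; rewrite (cd_lin M) !liftK //.
  by rewrite /in_Z (cd_lin M) x_Z y_Z scaler0 addr0.
by apply: t_d; rewrite liftK //; exact: cd_dd.
Qed.

Definition cycles {R : pzRingType} (X : complex R) k : {pred X k} :=
  fun x => cd X k (k - 1) x == 0.

Lemma cycles_closed {R : pzRingType} (X : complex R) k :
  GRing.submod_closed (cycles X k).
Proof.
split=> [|a u v]; rewrite !unfold_in /cycles ?cd0 // (cd_lin X).
by move=> /eqP-> /eqP->; rewrite scaler0 addr0.
Qed.

Lemma injective_extend_cycles {R : pzRingType} {X : complex R} {k}
    {E : lmodType R} {f : X k -> E} :
  injective_mod E -> lin_on_Z f ->
  exists F : X k -> E, lin F /\ forall x, in_Z x -> F x = f x.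
Proof.
move=> E_inj f_lin.
have f_linS a x y : x \in cycles X k -> y \in cycles X k ->
    f (a *: x + y) = a *: f x + f y.
  by move=> /eqP x_Z /eqP y_Z; exact: f_lin.
have [F [F_lin Ff]] := injective_extend (cycles_closed X k) E_inj f_linS.
by exists F; split=> // x /eqP x_Z; exact: Ff.
Qed.

Section QuasiFrobeniusHomotopy.
Context {R : pzRingType} {M N : complex R} {h : forall i, M i -> N i}.
Hypotheses (QF : quasi_frobenius R) (M_exact : exact_cx M) (h_hom : cx_hom h).
Hypothesis Z_subproj : forall n, subproj_Z M (n - 1) (N n).

Definition homotopy_on_boundaries i (s : M i -> N (i + 1)) :=
  forall y : M (i + 1),
    h i (cd M (i + 1) i y) = cd N (i + 1) i (s (cd M (i + 1) i y)).

Definition homotopy_at i j (s : M i -> N (i + 1)) (s' : M j -> N (j + 1)) :=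
  forall m, h i m = tr N (j + 1) i (s' (cd M i j m)) + cd N (i + 1) i (s m).

Lemma homotopy_at_boundaries i (s : M i -> N (i + 1))
    (s' : M (i - 1) -> N (i - 1 + 1)) :
  homotopy_at i (i - 1) s s' -> homotopy_on_boundaries (i - 1) s'.
Proof.
move=> hs; suff gen i' (y : M i') : i' = i ->
    h (i - 1) (cd M i' (i - 1) y) = cd N (i - 1 + 1) (i - 1) (s' (cd M i' (i - 1) y)).
  by move=> y; apply: gen; lia.
move=> e; subst i'; rewrite h_hom.2 hs cdD cd_dd addr0.
by symmetry; apply: cd_tr; lia.
Qed.

Lemma homotopy_step i (s : M i -> N (i + 1)) :
  proj_factor s -> homotopy_on_boundaries i s ->
  exists2 s' : M (i - 1) -> N (i - 1 + 1),
    proj_factor s' /\ homotopy_on_boundaries (i - 1) s' & homotopy_at i (i - 1) s s'.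
Proof.
move=> s_fact s_bd.
pose t m := h i m - cd N (i + 1) i (s m).
have t_lin : lin t.
  exact: lin_sub (h_hom.1 i) (lin_comp (proj_factor_lin s_fact) (cd_lin N _ _)).
have t_Z m : in_Z m -> t m = 0 by move=> /(M_exact i) [y <-]; rewrite /t s_bd subrr.
have [t' [t'_lin t'_d]] := exact_descend M_exact t_lin t_Z.
have [P [P_proj [f [g [f_lin g_lin gf]]]]] := Z_subproj i t' t'_lin.
have [F [F_lin Ff]] := injective_extend_cycles (QF P P_proj) f_lin.
pose s' m := tr N i (i - 1 + 1) (g (F m)).
have s's : homotopy_at i (i - 1) s s'.
  move=> m; rewrite /s' tr_tr; last by lia.
  by rewrite Ff ?gf ?t'_d /t ?subrK //; exact: cd_dd.
exists s' => //; split; last exact: homotopy_at_boundaries s's.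
exists P; split=> //; exists F, (fun p => tr N i (i - 1 + 1) (g p)).
by split=> //; exact: lin_comp g_lin tr_lin.
Qed.

Lemma quasi_frobenius_null_homotopy {b} :
  (forall n, b <= n -> forall x : N n, x = 0) ->
  exists s : forall i, M i -> N (i + 1),
    (forall i, proj_factor (s i)) /\ null_homotopy h s.
Proof.
move=> N_bounded.
have [|i s [s_fact s_bd]|s [s_P s_rel]] := downward_recursion (fun i (_ : M i) => 0)
  (fun i s => proj_factor s /\ homotopy_on_boundaries i s) homotopy_at (b - 1).
- move=> i le_bi; split=> [|y]; first exact: proj_factor0.
  by rewrite h_hom.2 (N_bounded (i + 1) _ (h (i + 1) y)) ?cd0 //; lia.
- exact: homotopy_step.
exists s; split=> [i|i x]; first by case: (s_P i).
have [le_ib|lt_bi] := boolP (i <= b - 1); first exact: s_rel.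
by rewrite [LHS]N_bounded ?[RHS]N_bounded //; lia.
Qed.

End QuasiFrobeniusHomotopy.

Lemma quasi_frobenius_subproj_cx {R : pzRingType} : quasi_frobenius R ->
  forall M N : complex R, exact_cx M -> bounded_above N ->
  (forall n, subproj_Z M (n - 1) (N n)) -> subproj_cx M N.
Proof.
move=> QF M N M_exact [b N_bounded] Z_subproj h h_hom.
have [s [s_fact s_h]] :=
  quasi_frobenius_null_homotopy QF M_exact h_hom Z_subproj N_bounded.
exact: null_homotopy_proj_factor_cx s_fact s_h.
Qed.

Section ShortExactComplex.
Context {R : pzRingType} {A B : lmodType R} {iota : A -> B}.
Hypotheses (iota_lin : lin iota) (iota_inj : injective iota).

Definition image_pred : {pred B} := fun b => `[< exists a, b = iota a >].

Lemma image_closed : GRing.submod_closed image_pred.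
Proof.
split; first by apply/asboolP; exists 0; rewrite (lin_0 iota_lin).
move=> r u v /asboolP [a ->] /asboolP [a' ->]; apply/asboolP.
by exists (r *: a + a'); rewrite iota_lin.
Qed.

Local Notation coker := (modquot image_closed).

Lemma pi_iota a : \pi_coker (iota a) = 0.
Proof. by apply/eqP; rewrite pi_eq0; apply/asboolP; exists a. Qed.

Definition ses_obj (i : int) : lmodType R :=
  match i with Posz 2 => A | Posz 1 => B | Posz 0 => coker | _ => zero_mod R end.

Definition ses_d i j : ses_obj i -> ses_obj j :=
  match i, j return ses_obj i -> ses_obj j with
  | Posz 2, Posz 1 => iota
  | Posz 1, Posz 0 => \pi_coker
  | _, _ => fun _ => 0
  end.

Lemma ses_d_lin i j : lin (ses_d i j).
Proof.
case: i => [[|[|[|i]]]|i]; case: j => [[|[|[|j]]]|j]; try exact: lin_cst0.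
  exact: lin_pi.
exact: iota_lin.
Qed.

Lemma ses_d_zero i j : j != i - 1 -> forall x, ses_d i j x = 0.
Proof. by case: i => [[|[|[|i]]]|i]; case: j => [[|[|[|j]]]|j]. Qed.

Lemma ses_dd i j k x : ses_d j k (ses_d i j x) = 0.
Proof.
case: i x => [[|[|[|i]]]|i] x; case: j => [[|[|[|j]]]|j];
  rewrite ?(lin_0 (ses_d_lin _ _)) //.
by case: k => [[|[|[|k]]]|k] //; exact: pi_iota.
Qed.

Definition ses_complex : complex R :=
  @Complex R ses_obj ses_d ses_d_lin ses_d_zero ses_dd.

Lemma ses_exact : exact_cx ses_complex.
Proof.
case=> [[|[|[|n]]]|n] x x_Z.
- by exists (repr x); rewrite /= reprK.
- have /asboolP [a ->] : x \in image_pred by rewrite -(pi_eq0 image_closed); apply/eqP.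
  by exists a.
- by exists 0; apply: iota_inj; rewrite (lin_0 iota_lin); symmetry.
- by exists 0; rewrite (zero_mod_eq0 (R := R) x) cd0.
- by exists 0; rewrite (zero_mod_eq0 (R := R) x) cd0.
Qed.

End ShortExactComplex.

Lemma cd_shift_stalk {R : pzRingType} (P : lmodType R) n i j x :
  cd (shift (stalk P) n) i j x = 0.
Proof. by rewrite /= /shift_d; case: odd => //; rewrite oppr0. Qed.

Section StalkExtension.
Context {R : pzRingType}.
Hypothesis stalk_subproj : forall (M : complex R) (N : lmodType R), exact_cx M ->
  forall n : int, subproj_Z M (n - 1) N -> subproj_cx M (shift (stalk N) n).

Lemma stalk_subproj_extend {A B P : lmodType R} {iota : A -> B} {hA : A -> P} :
  lin iota -> injective iota -> projective_mod P -> lin hA ->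
  exists k : B -> P, lin k /\ forall x, k (iota x) = hA x.
Proof.
move=> iota_lin iota_inj P_proj hA_lin.
pose M := ses_complex iota_lin.
pose hm i : M i -> shift (stalk P) 2 i :=
  match i with Posz 2 => hA | _ => fun _ => 0 end.
have hm_hom : cx_hom hm.
  split=> [[[|[|[|i]]]|i]|i j x]; try exact: lin_cst0; first exact: hA_lin.
  rewrite cd_shift_stalk.
  by case: j => [[|[|[|j]]]|j] //=; case: i x => [[|[|[|i]]]|i] x //=; exact: lin_0.
have [s [s_lin s_h]] := proj_factor_cx_null_homotopy (stalk_subproj M P
  (ses_exact iota_lin iota_inj) 2 (subproj_Z_projective M _ P P_proj) hm hm_hom).
exists (s 1); split=> [|a]; first exact: (s_lin 1).
by rewrite [RHS](s_h 2 a) cd_shift_stalk addr0 tr_id.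
Qed.

End StalkExtension.

Lemma stalk_subproj_quasi_frobenius {R : pzRingType} :
  (forall (M : complex R) (N : lmodType R), exact_cx M ->
    forall n : int, subproj_Z M (n - 1) N -> subproj_cx M (shift (stalk N) n)) ->
  quasi_frobenius R.
Proof.
move=> stalk_subproj P P_proj A B iota iota_lin iota_inj hA hA_lin.
exact: (stalk_subproj_extend stalk_subproj iota_lin iota_inj P_proj hA_lin).
Qed.

Lemma bounded_subproj_stalk {R : pzRingType} :
  (forall M N : complex R, exact_cx M -> bounded_above N ->
    (forall n : int, subproj_Z M (n - 1) (N n)) -> subproj_cx M N) ->
  forall (M : complex R) (N : lmodType R), exact_cx M ->
    forall n : int, subproj_Z M (n - 1) N -> subproj_cx M (shift (stalk N) n).
Proof.
move=> bounded_subproj M N M_exact n N_subproj; apply: bounded_subproj => //.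
  exists (n + 1) => m le_nm; rewrite /= /stalk_obj.
  have -> : (m - n == 0) = false by apply/eqP; lia.
  exact: zero_mod_eq0.
move=> m; rewrite /= /stalk_obj.
have [->|ne] := eqVneq m n; first by rewrite subrr eqxx.
have -> : (m - n == 0) = false by apply/eqP; move/eqP: ne; lia.
exact/subproj_Z_projective/projective_zero_mod.
Qed.

Theorem proposition2p2 (R : pzRingType) :
  ((forall (M N : complex R), exact_cx M -> bounded_above N ->
      (forall n : int, subproj_Z M (n - 1) (N n)) -> subproj_cx M N)
   <->
   (forall (M : complex R) (N : lmodType R), exact_cx M ->
      forall n : int, subproj_Z M (n - 1) N ->
      subproj_cx M (shift (stalk N) n)))
  /\
  ((forall (M : complex R) (N : lmodType R), exact_cx M ->
      forall n : int, subproj_Z M (n - 1) N ->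
      subproj_cx M (shift (stalk N) n))
   <-> quasi_frobenius R).
Proof.
have qf_bounded := @quasi_frobenius_subproj_cx R.
have stalk_qf := @stalk_subproj_quasi_frobenius R.
split; split.
- exact: bounded_subproj_stalk.
- by move=> /stalk_qf /qf_bounded.
- exact: stalk_qf.
- by move=> /qf_bounded /bounded_subproj_stalk.
Qed.
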